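(* Let $\mathcal{A},\mathcal{B}$ be small categories, $L\dashv R:\mathcal{B}\to\mathcal{A}$ an adjunction with $R$ fully faithful and unit $\nu$, and $J$ a Grothendieck topology on $\mathcal{B}$. Let $f:\widehat{\mathcal{A}}\to\widehat{\mathcal{B}}$ be the induced local essential geometric morphism. Then the canonical transformation $\theta_X : f_*X\to f_!X$ is $J$-locally surjective for every $X$ in $\widehat{\mathcal{A}}$ if and only if, for every $C$ in $\mathcal{A}$, the map $\mathcal{A}(R-,\nu_C):\mathcal{A}(R-,C)\to\mathcal{A}(R-,R(LC))$ in $\widehat{\mathcal{B}}$ is $J$-locally surjective.
   Context: $\widehat{\mathcal{C}}$ denotes presheaves on $\mathcal{C}$. The geometric morphism $f$ has inverse image $f^*$ = precomposition with $L$, left adjoint $f_!$ = left Kan extension along $L$, and direct image $f_*$ = precomposition with $R$. For $X\in\widehat{\mathcal{A}}$ and $B\in\mathcal{B}$, elements of $(f_!X)B$ are classes $x\otimes b$ with $x\in XC$, $b:B\to LC$, subject to $(x\cdot u)\otimes v = x\otimes((Lu)v)$; the canonical $\theta_{X,B}:(f_*X)B = X(RB)\to(f_!X)B$ sends $x$ to $x\otimes\xi_B^{-1}$, where $\xi:LR\to\mathrm{id}$ is the (invertible) counit. A map $\lambda:F\to G$ in $\widehat{\mathcal{B}}$ is $J$-locally surjective if for each object $B$ and $y\in GB$ there is a $J$-covering sieve $S$ on $B$ such that for every $e:E\to B$ in $S$, $y\cdot e$ is in the image of $\lambda_E$. Concretely, $\mathcal{A}(R-,\nu_C)$ is locally surjective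 iff for every $D\in\mathcal{B}$ and $d:RD\to R(LC)$ there is $S\in JD$ such that for every $e:E\to D$ in $S$, $d\circ Re$ factors through $\nu_C:C\to R(LC)$. *)

From Stdlib Require Import Relation_Operators.

Set Implicit Arguments.
Unset Strict Implicit.

Record Cat := {
  Obj :> Type;
  Hom : Obj -> Obj -> Type;
  idm : forall x, Hom x x;
  comp : forall x y z, Hom y z -> Hom x y -> Hom x z;
  comp_id_l : forall x y (f : Hom x y), comp (idm y) f = f;
  comp_id_r : forall x y (f : Hom x y), comp f (idm x) = f;
  comp_assoc : forall x y z w (f : Hom x y) (g : Hom y z) (h : Hom z w),
      comp h (comp g f) = comp (comp h g) f
}.
Arguments Hom {c} _ _.
Arguments idm {c} _.
Arguments comp {c x y z} _ _.
Notation "g \o' f" := (comp g f) (at level 40, left associativity).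

Record Functor (C D : Cat) := {
  fobj :> C -> D;
  fmap : forall x y, Hom x y -> Hom (fobj x) (fobj y);
  fmap_id : forall x, fmap (idm x) = idm (fobj x);
  fmap_comp : forall x y z (f : Hom x y) (g : Hom y z),
      fmap (g \o' f) = fmap g \o' fmap f
}.
Arguments fmap {C D} f0 {x y} _.

Definition fully_faithful (C D : Cat) (F : Functor C D) : Prop :=
  forall x y : C,
    (forall f g : Hom x y, fmap F f = fmap F g -> f = g) /\
    (forall h : Hom (F x) (F y), exists f : Hom x y, fmap F f = h).

Record Adjunction (A B : Cat) (L : Functor A B) (R : Functor B A) := {
  unit_ : forall c : A, Hom c (R (L c));
  counit_ : forall b : B, Hom (L (R b)) b;
  unit_nat : forall c d (u : Hom d c),
      fmap R (fmap L u) \o' unit_ d = unit_ c \o' u;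
  counit_nat : forall b b' (g : Hom b' b),
      counit_ b \o' fmap L (fmap R g) = g \o' counit_ b';
  triangle_L : forall c : A, counit_ (L c) \o' fmap L (unit_ c) = idm (L c);
  triangle_R : forall b : B, fmap R (counit_ b) \o' unit_ (R b) = idm (R b)
}.

Definition sieve (C : Cat) (b : C) := forall e : C, Hom e b -> Prop.

Definition is_sieve (C : Cat) (b : C) (S : sieve b) : Prop :=
  forall e (f : Hom e b) d (g : Hom d e), S e f -> S d (f \o' g).

Definition pullback_sieve (C : Cat) (b e : C) (f : Hom e b) (S : sieve b)
  : sieve e := fun d g => S d (f \o' g).

Unset Implicit Arguments.
Record GrothTopology (C : Cat) := {
  covers :> forall b : C, sieve b -> Prop;
  covers_sieve : forall b S, covers b S -> is_sieve S;
  covers_max : forall b, covers b (fun _ _ => True);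
  covers_stable : forall b S, covers b S ->
      forall e (f : Hom e b), covers e (pullback_sieve f S);
  covers_trans : forall b S, covers b S -> forall S' : sieve b, is_sieve S' ->
      (forall e (f : Hom e b), S e f -> covers e (pullback_sieve f S')) ->
      covers b S'
}.

Set Implicit Arguments.

Record Psh (C : Cat) := {
  pobj :> C -> Type;
  pact : forall c d, pobj c -> Hom d c -> pobj d;
  pact_id : forall c (x : pobj c), pact x (idm c) = x;
  pact_comp : forall c d e (x : pobj c) (u : Hom d c) (v : Hom e d),
      pact (pact x u) v = pact x (u \o' v)
}.
Arguments pact {C} p {c d} _ _.

(* J-local surjectivity of a family lam : F -> G, where G is given by its
   carrier, restriction action, and the equality [eqG] on its elements
   (Leibniz equality for genuine presheaves; the coend relation for f_!). *)
Definition locally_surjective (C : Cat) (J : GrothTopology C)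
  (F G : C -> Type) (actG : forall d e, G d -> Hom e d -> G e)
  (eqG : forall e, G e -> G e -> Prop) (lam : forall d, F d -> G d) : Prop :=
  forall (d : C) (y : G d), exists S : sieve d, J d S /\
    forall e (f : Hom e d), S e f -> exists x : F e, eqG e (lam e x) (actG d e y f).

Section Essential.
Variables (A B : Cat) (L : Functor A B) (R : Functor B A).

Definition homR (c : A) : B -> Type := fun d => Hom (R d) c.
Definition homR_act (c : A) (d e : B) (x : homR c d) (g : Hom e d) : homR c e :=
  x \o' fmap R g.
Definition homR_post (c c' : A) (u : Hom c c') (d : B) (x : homR c d) : homR c' d :=
  u \o' x.

Variable X : Psh A.

Definition fstar (b : B) : Type := X (R b).

(* Representatives x (x) b of elements of (f_! X) b, b : B -> L c. *)
Definition fshriek_rep (b : B) : Type := { c : A & (X c * Hom b (L c))%type }.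

Definition fshriek_act (b e : B) (p : fshriek_rep b) (g : Hom e b) : fshriek_rep e :=
  existT _ (projT1 p) (fst (projT2 p), snd (projT2 p) \o' g).

Inductive fshriek_gen (b : B) : fshriek_rep b -> fshriek_rep b -> Prop :=
| fshriek_gen_intro : forall (c d : A) (x : X c) (u : Hom d c) (v : Hom b (L d)),
    fshriek_gen (existT _ d (pact X x u, v)) (existT _ c (x, fmap L u \o' v)).

(* Equality in the coend (f_! X) b: equivalence closure. *)
Definition fshriek_eq (b : B) : fshriek_rep b -> fshriek_rep b -> Prop :=
  clos_refl_sym_trans _ (@fshriek_gen b).

Definition theta (xiinv : forall b : B, Hom b (L (R b))) (b : B) (x : fstar b)
  : fshriek_rep b := existT _ (R b) (x, xiinv b).

End Essential.

From Stdlib Require Import Relation_Operators.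

Set Implicit Arguments.

(* The transpose of [w : R e -> c] under the adjunction is [L w o xi_e^{-1}], and
   [R] sends it to [nu_c o w].  Hence, [R] being fully faithful, an element
   [x (x) v] of [(f_! X) e] is the image under [theta] of [x . w] as soon as
   [R v = nu_c o w], which gives one direction.  Conversely, [f_!] of the
   representable [A(-, c)] is [B(-, L c)] via [x (x) v |-> L x o v]; applied to
   [id_c (x) g] with [R g = y], local surjectivity of [theta] produces exactly
   the local factorisations of [y] through [nu_c]. *)

Section Transpose.
Variables (A B : Cat) (L : Functor A B) (R : Functor B A) (adj : Adjunction L R)
  (xiinv : forall b : B, Hom b (L (R b)))
  (xiinv_r : forall b : B, xiinv b \o' counit_ adj b = idm (L (R b))).

Lemma unit_R_eq (e : B) : unit_ adj (R e) = fmap R (xiinv e).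
Proof.
  rewrite <- (comp_id_r (fmap R (xiinv e))), <- (triangle_R adj e).
  rewrite comp_assoc, <- fmap_comp, xiinv_r, fmap_id, comp_id_l.
  reflexivity.
Qed.

Lemma fmap_R_transpose (e : B) (c : A) (w : Hom (R e) c) :
  fmap R (fmap L w \o' xiinv e) = unit_ adj c \o' w.
Proof. rewrite fmap_comp, <- unit_R_eq. apply (unit_nat adj). Qed.

Lemma theta_act_eq (R_ff : fully_faithful R) (X : Psh A) (e : B) (c : A)
    (x : X c) (w : Hom (R e) c) (v : Hom e (L c)) :
  fmap R v = unit_ adj c \o' w ->
  @fshriek_eq A B L X e (@theta A B L R X xiinv e (pact X x w)) (existT _ c (x, v)).
Proof.
  intros Hv.
  assert (Ev : fmap L w \o' xiinv e = v).
  { apply (proj1 (R_ff e (L c))). rewrite fmap_R_transpose. symmetry; exact Hv. }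
  rewrite <- Ev. apply rst_step. constructor.
Qed.

End Transpose.

Definition yoneda {C : Cat} (c : C) : Psh C.
Proof.
  refine (@Build_Psh C (fun d => Hom d c) (fun d d' x u => x \o' u) _ _).
  - intros; apply comp_id_r.
  - intros; symmetry; apply comp_assoc.
Defined.

Section Representable.
Variables (A B : Cat) (L : Functor A B).

Definition fshriek_yoneda_eval (c : A) (b : B)
    (p : fshriek_rep L (yoneda c) b) : Hom b (L c) :=
  fmap L (fst (projT2 p)) \o' snd (projT2 p).

Lemma fshriek_yoneda_eval_eq (c : A) (b : B) (p q : fshriek_rep L (yoneda c) b) :
  fshriek_eq p q -> fshriek_yoneda_eval p = fshriek_yoneda_eval q.
Proof.
  induction 1 as [p q Hpq | | |]; try congruence.
  destruct Hpq. unfold fshriek_yoneda_eval; simpl.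
  rewrite fmap_comp. symmetry; apply comp_assoc.
Qed.

End Representable.

Section Equivalence.
Variables (A B : Cat) (L : Functor A B) (R : Functor B A) (adj : Adjunction L R)
  (R_ff : fully_faithful R) (xiinv : forall b : B, Hom b (L (R b)))
  (xiinv_r : forall b : B, xiinv b \o' counit_ adj b = idm (L (R b)))
  (J : GrothTopology B).

Lemma homR_post_unit_ls_of_theta_ls (c : A) :
  @locally_surjective B J (@fstar A B R (yoneda c)) (@fshriek_rep A B L (yoneda c))
    (@fshriek_act A B L (yoneda c)) (@fshriek_eq A B L (yoneda c))
    (@theta A B L R (yoneda c) xiinv) ->
  @locally_surjective B J (@homR A B R c) (@homR A B R (R (L c)))
    (@homR_act A B R (R (L c))) (fun _ => @eq _) (@homR_post A B R c (R (L c)) (unit_ adj c)).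
Proof.
  intros Htheta d y.
  destruct (proj2 (R_ff d (L c)) y) as [g <-].
  destruct (Htheta d (existT _ c (idm c, g))) as [S [HS Hcover]].
  exists S; split; [exact HS |].
  intros e f Hf. destruct (Hcover e f Hf) as [w Hw].
  exists w. apply fshriek_yoneda_eval_eq in Hw.
  unfold fshriek_yoneda_eval in Hw; simpl in Hw.
  rewrite fmap_id, comp_id_l in Hw.
  unfold homR_post, homR_act.
  rewrite <- (fmap_R_transpose adj xiinv xiinv_r), Hw, fmap_comp.
  reflexivity.
Qed.

Lemma theta_ls_of_homR_post_unit_ls (X : Psh A) :
  (forall c : A,
     @locally_surjective B J (@homR A B R c) (@homR A B R (R (L c)))
       (@homR_act A B R (R (L c))) (fun _ => @eq _) (@homR_post A B R c (R (L c)) (unit_ adj c))) ->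
  @locally_surjective B J (@fstar A B R X) (@fshriek_rep A B L X)
    (@fshriek_act A B L X) (@fshriek_eq A B L X) (@theta A B L R X xiinv).
Proof.
  intros Hunit d [c [x v]].
  destruct (Hunit c d (fmap R v)) as [S [HS Hcover]].
  exists S; split; [exact HS |].
  intros e f Hf. destruct (Hcover e f Hf) as [w Hw].
  exists (pact X x w).
  apply (theta_act_eq adj xiinv xiinv_r R_ff).
  unfold homR_post, homR_act in Hw. simpl.
  rewrite fmap_comp. symmetry; exact Hw.
Qed.

End Equivalence.

Theorem lemma6p8 (A B : Cat) (L : Functor A B) (R : Functor B A)
  (adj : Adjunction L R) (R_ff : fully_faithful R)
  (xiinv : forall b : B, Hom b (L (R b)))
  (xiinv_l : forall b : B, counit_ adj b \o' xiinv b = idm b)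
  (xiinv_r : forall b : B, xiinv b \o' counit_ adj b = idm (L (R b)))
  (J : GrothTopology B) :
  (forall X : Psh A,
      @locally_surjective B J (@fstar A B R X) (@fshriek_rep A B L X)
        (@fshriek_act A B L X) (@fshriek_eq A B L X)
        (@theta A B L R X xiinv))
  <->
  (forall c : A,
      @locally_surjective B J (@homR A B R c) (@homR A B R (R (L c)))
        (@homR_act A B R (R (L c))) (fun _ => @eq _)
        (@homR_post A B R c (R (L c)) (unit_ adj c))).
Proof.
  split.
  - intros Htheta c.
    exact (homR_post_unit_ls_of_theta_ls adj R_ff xiinv_r (Htheta (yoneda c))).
  - intros Hunit X.
    exact (theta_ls_of_homR_post_unit_ls adj R_ff xiinv xiinv_r Hunit).
Qed.
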